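(* Let $f:\mathbb{R}^d\to\mathbb{R}$ and $P:\mathbb{R}^d\to\mathbb{R}^s$ be continuously differentiable, $D\subseteq\mathbb{R}^s$ closed, $\Omega=\{z\mid P(z)\in D\}$. Assume that $\bar z\in\Omega$ is a sharp minimum for the problem $\min f(z)$ s.t. $P(z)\in D$, that GGCQ holds at $\bar z$, and that the mapping $u\rightrightarrows\nabla P(\bar z)u-T_D(P(\bar z))$ is metrically subregular at $(0,0)$. Then there exist $w\in T_D(P(\bar z))$ and a multiplier $w^\ast\in\widehat N_{T_D(P(\bar z))}(w)$ such that $\nabla f(\bar z)+\nabla P(\bar z)^\ast w^\ast=0$.
   Context: Tangent cone $T_\Omega(\bar z)=\{w\mid \exists t_k\downarrow0,\ w_k\to w,\ \bar z+t_kw_k\in\Omega\}$; polar cone $K^\ast=\{z^\ast\mid\langle z^\ast,w\rangle\le0\ \forall w\in K\}$; regular normal cone $\widehat N_\Omega(\bar z)=(T_\Omega(\bar z))^\ast$. Linearized tangent cone $T^{\rm lin}_{P,D}(\bar z)=\{u\mid\nabla P(\bar z)u\in T_D(P(\bar z))\}$. GGCQ holds at $\bar z$ if $\widehat N_\Omega(\bar z)=(T^{\rm lin}_{P,D}(\bar z))^\ast$. A point $\bar z\in\Omega$ is a sharp minimum if there is $\alpha>0$ with $f(z)\ge f(\bar z)+\alpha\|z-\bar z\|$ for all $z\in\Omega$ near $\bar z$. A mapping $M$ is metrically subregular at $(\bar z,\bar w)\in\operatorname{gph}M$ if there are a neighborhood $W$ of $\bar z$ and $\kappa>0$ with $\operatorname{dist}(z,M^{-1}(\bar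 w))\le\kappa\operatorname{dist}(\bar w,M(z))$ for $z\in W$. *)

From HB Require Import structures.
From mathcomp Require Import all_boot all_order all_algebra.
From mathcomp Require Import all_classical all_reals all_analysis.
Set Implicit Arguments. Unset Strict Implicit. Unset Printing Implicit Defensive.
Import Order.TTheory GRing.Theory Num.Theory.
Import numFieldNormedType.Exports.
Local Open Scope classical_set_scope.
Local Open Scope ring_scope.

Section Defs.
Variable R : realType.

Definition dotp (n : nat) (u v : 'rV[R]_n) : R := (u *m v^T) 0 0.

Definition grad (n : nat) (f : 'rV[R]_n -> R) (z : 'rV[R]_n) : 'rV[R]_n :=
  \row_(i < n) ('d f z) (delta_mx 0 i).

Definition tangent_cone (n : nat) (A : set 'rV[R]_n) (z : 'rV[R]_n) : set 'rV[R]_n :=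
  [set w | exists (t : nat -> R) (wk : nat -> 'rV[R]_n),
      (forall k, 0 < t k) /\ t @ \oo --> (0 : R) /\ wk @ \oo --> w /\
      (forall k, A (z + t k *: wk k))].

Definition polar (n : nat) (K : set 'rV[R]_n) : set 'rV[R]_n :=
  [set zs | forall w, K w -> dotp zs w <= 0].

Definition reg_normal_cone (n : nat) (A : set 'rV[R]_n) (z : 'rV[R]_n) : set 'rV[R]_n :=
  polar (tangent_cone A z).

Definition lin_tangent_cone (d s : nat) (P : 'rV[R]_d -> 'rV[R]_s)
  (D : set 'rV[R]_s) (z : 'rV[R]_d) : set 'rV[R]_d :=
  [set u | tangent_cone D (P z) ('d P z u)].

Definition GGCQ (d s : nat) (P : 'rV[R]_d -> 'rV[R]_s) (D : set 'rV[R]_s)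
  (z : 'rV[R]_d) : Prop :=
  reg_normal_cone [set x | D (P x)] z = polar (lin_tangent_cone P D z).

Definition sharp_min (d : nat) (f : 'rV[R]_d -> R) (Omega : set 'rV[R]_d)
  (zb : 'rV[R]_d) : Prop :=
  Omega zb /\ exists alpha : R, 0 < alpha /\
    \forall z \near zb, Omega z -> f zb + alpha * `|z - zb| <= f z.

(* distance from a point to a set (+oo for the empty set) *)
Definition dist_set (n : nat) (x : 'rV[R]_n) (A : set 'rV[R]_n) : \bar R :=
  ereal_inf [set (`|x - y|)%:E | y in A].

Definition metric_subregular (m n : nat) (M : 'rV[R]_m -> set 'rV[R]_n)
  (zb : 'rV[R]_m) (wb : 'rV[R]_n) : Prop :=
  M zb wb /\ exists W : set 'rV[R]_m, nbhs zb W /\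
    exists kappa : R, 0 < kappa /\
      forall z, W z ->
        (dist_set z [set x | M x wb] <= kappa%:E * dist_set wb (M z))%E.

End Defs.

(** At a sharp minimum with modulus [a], [a/2 |u| <= <grad f zb, u>] on the
    tangent cone of Omega.  Such a growth condition only depends on the polar
    of the cone, so GGCQ transfers it to the linearized cone
    [{u | A u \in K}], where [A = 'd P zb] and [K = T_D(P zb)].  Metric
    subregularity of [u => A u - K] turns it into an exact penalty bound
    [b |u| - C |A u - y| <= <g, u>] for all [u] and [y \in K]; hence
    [<g, u> + |A u - y|^2] is coercive on [R^d x K] and has a minimizer
    [(u, y)].  With [w* = 2 (A u - y)], stationarity in [u] reads
    [g + A^T w* = 0], and stationarity of [y] along the tangent directions of
    [K] reads [w* \in polar (T_K(y))]; take [w = y]. *)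

From HB Require Import structures.
From mathcomp Require Import all_boot all_order all_algebra.
From mathcomp Require Import all_classical all_reals all_analysis.
From mathcomp Require Import ring lra.
Import Order.TTheory GRing.Theory Num.Theory.
Import numFieldNormedType.Exports.
Local Open Scope classical_set_scope.
Local Open Scope ring_scope.
Set Implicit Arguments. Unset Strict Implicit. Unset Printing Implicit Defensive.

Section DotProduct.
Variables (R : realType) (n : nat).
Implicit Types (u v w : 'rV[R]_n).

Lemma dotpE u v : dotp u v = \sum_i u 0 i * v 0 i.
Proof. by rewrite /dotp mxE; apply: eq_bigr => i _; rewrite mxE. Qed.

Lemma dotpC u v : dotp u v = dotp v u.
Proof. by rewrite !dotpE; apply: eq_bigr => i _; rewrite mulrC. Qed.

Lemma dotpDr u v w : dotp u (v + w) = dotp u v + dotp u w.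
Proof. by rewrite !dotpE -big_split; apply: eq_bigr => i _; rewrite mxE mulrDr. Qed.

Lemma dotpZr a u v : dotp u (a *: v) = a * dotp u v.
Proof. by rewrite !dotpE mulr_sumr; apply: eq_bigr => i _; rewrite mxE mulrCA. Qed.

Lemma dotpDl u v w : dotp (v + w) u = dotp v u + dotp w u.
Proof. by rewrite dotpC dotpDr !(dotpC u). Qed.

Lemma dotpZl a u v : dotp (a *: v) u = a * dotp v u.
Proof. by rewrite dotpC dotpZr dotpC. Qed.

Lemma dotpNl u v : dotp (- v) u = - dotp v u.
Proof. by rewrite -scaleN1r dotpZl mulN1r. Qed.

Lemma dotp0r u : dotp u 0 = 0.
Proof. by rewrite -(scale0r 0) dotpZr mul0r. Qed.

Lemma dotp_delta_mx u i : dotp u (delta_mx 0 i) = u 0 i.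
Proof.
rewrite dotpE (bigD1 i) //= mxE !eqxx mulr1 big1 ?addr0 // => j ji.
by rewrite mxE (negbTE ji) andbF mulr0.
Qed.

Lemma dotppDZ u v t :
  dotp (u + t *: v) (u + t *: v) = dotp u u + t * (2 * dotp u v) + t ^+ 2 * dotp v v.
Proof. by rewrite !dotpDl !dotpDr !dotpZl !dotpZr [dotp v u]dotpC expr2; ring. Qed.

Lemma dotpp_ge0 u : 0 <= dotp u u.
Proof. by rewrite dotpE sumr_ge0 // => i _; rewrite -expr2 sqr_ge0. Qed.

Lemma continuous_dotp (T : topologicalType) (h1 h2 : T -> 'rV[R]_n) :
  continuous h1 -> continuous h2 -> continuous (fun p => dotp (h1 p) (h2 p)).
Proof.
move=> c1 c2; have -> : (fun p => dotp (h1 p) (h2 p)) =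
    \sum_(i < n) (fun p => h1 p 0 i * h2 p 0 i).
  by rewrite fct_sumE; apply: funext => p; rewrite dotpE.
elim/big_ind : _ => [x|f g cf cg x|i _ x]; first exact: cvg_cst.
  by apply: continuousD; [exact: cf|exact: cg].
by apply: cvgM; [exact: (continuous_cvg _ (@coord_continuous R 1 n 0 i (h1 x)) (c1 x))
  |exact: (continuous_cvg _ (@coord_continuous R 1 n 0 i (h2 x)) (c2 x))].
Qed.

(** [`|u|] is the max norm [mx_norm]; its dual norm, in [norm_dotp_le], is
    the l1 norm. *)
Lemma coord_le_norm u i : `|u 0 i| <= `|u|.
Proof.
have -> : `|u| = mx_norm u by [].
by rewrite mx_normrE; apply/bigmax_geP; right; exists (0, i).
Qed.

Lemma norm_attained u : u != 0 -> exists i, `|u| = `|u 0 i|.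
Proof.
move=> u0; have /mx_norm_neq0 [[i j] /= uij] : mx_norm u != 0.
  by apply: contra u0 => /eqP/mx_norm_eq0 ->.
by exists j; rewrite -(ord1 i); exact: uij.
Qed.

Lemma sqr_norm_le_dotpp u : `|u| ^+ 2 <= dotp u u.
Proof.
have [->|u0] := eqVneq u 0; first by rewrite normr0 expr0n dotp0r.
have [i ->] := norm_attained u0.
rewrite dotpE (bigD1 i) //= real_normK ?num_real // -expr2 lerDl.
by rewrite sumr_ge0 // => j _; rewrite -expr2 sqr_ge0.
Qed.

Lemma norm_dotp_le u v : `|dotp u v| <= (\sum_i `|u 0 i|) * `|v|.
Proof.
rewrite dotpE mulr_suml (le_trans (ler_norm_sum _ _ _)) // ler_sum // => i _.
by rewrite normrM ler_wpM2l // coord_le_norm.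
Qed.

End DotProduct.

Lemma dotp_mulmx (R : realType) m n (w : 'rV[R]_n) (J : 'M[R]_(m, n)) u :
  dotp w (u *m J) = dotp (w *m J^T) u.
Proof. by rewrite /dotp trmx_mul mulmxA. Qed.

Section TangentCone.
Variables (R : realType) (n : nat).
Implicit Types (A : set 'rV[R]_n) (z w : 'rV[R]_n).

Lemma tangent_coneP A z w : tangent_cone A z w <->
  (forall e del : R, 0 < e -> 0 < del ->
     exists t v, [/\ 0 < t, t < del, `|v - w| < e & A (z + t *: v)]).
Proof.
split=> [[t [wk [t0 [t_cvg [wk_cvg Awk]]]]] e del e0 del0|approx].
  move/cvgrPdist_lt : t_cvg => /(_ _ del0) t_near.
  move/cvgrPdist_lt : wk_cvg => /(_ _ e0) wk_near.
  have [k [tk wk']] := filter_ex (filterI t_near wk_near).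
  exists (t k), (wk k); split => //; last by rewrite distrC.
  by move: tk; rewrite sub0r normrN gtr0_norm.
have approx_k (k : nat) : exists tv : R * 'rV[R]_n, [/\ 0 < tv.1, tv.1 < k.+1%:R^-1,
    `|tv.2 - w| < k.+1%:R^-1 & A (z + tv.1 *: tv.2)].
  have k0 : 0 < k.+1%:R^-1 :> R by rewrite invr_gt0 ltr0n.
  by have [t [v [? ? ? ?]]] := approx _ _ k0 k0; exists (t, v).
pose tv k := proj1_sig (cid (approx_k k)).
have tvP k := proj2_sig (cid (approx_k k)).
exists (fun k => (tv k).1), (fun k => (tv k).2); split; last split; last split.
- by move=> k; have [] := tvP k.
- apply/cvgrPdist_lt => e e0; near=> k.
  have [t0 t_lt _ _] := tvP k.
  rewrite sub0r normrN gtr0_norm // (lt_trans t_lt) //.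
  by near: k; exact: near_infty_natSinv_lt (PosNum e0).
- apply/cvgrPdist_lt => e e0; near=> k.
  have [_ _ v_lt _] := tvP k.
  rewrite distrC (lt_trans v_lt) //.
  by near: k; exact: near_infty_natSinv_lt (PosNum e0).
- by move=> k; have [] := tvP k.
Unshelve. all: by end_near.
Qed.

Lemma closed_tangent_cone A z : closed (tangent_cone A z).
Proof.
move=> w w_cl; apply/tangent_coneP => e del e0 del0.
have e2 : 0 < e / 2 by rewrite divr_gt0.
have [w' [Tw' ww']] := w_cl _ (nbhsx_ballx w (e / 2) e2).
have [t [v [t0 tdel vw' Av]]] := proj1 (tangent_coneP A z w') Tw' _ _ e2 del0.
exists t, v; split => //; move: ww'; rewrite -ball_normE /= => ww'.
rewrite -(subrK w' v) -addrA (le_lt_trans (ler_normD _ _)) //.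
by rewrite (splitr e) ltrD // distrC.
Qed.

Lemma tangent_coneZ A z w l : 0 < l -> tangent_cone A z w -> tangent_cone A z (l *: w).
Proof.
move=> l0 /tangent_coneP Tw; apply/tangent_coneP => e del e0 del0.
have [t [v [t0 tdel vw Av]]] := Tw (e / l) (del * l) (divr_gt0 e0 l0) (mulr_gt0 del0 l0).
exists (t / l), (l *: v); split.
- by rewrite divr_gt0.
- by rewrite ltr_pdivrMr.
- by rewrite -scalerBr normrZ gtr0_norm // -ltr_pdivlMl // mulrC.
- by rewrite scalerA mulrVK // unitfE gt_eqF.
Qed.

Lemma tangent_cone0 A z : A z -> tangent_cone A z 0.
Proof.
move=> Az; apply/tangent_coneP => e del e0 del0.
exists (del / 2), 0; split; rewrite ?subrr ?normr0 ?scaler0 ?addr0 ?divr_gt0 //.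
by rewrite ltr_pdivrMr // ltr_pMr // ltr1n.
Qed.

Lemma tangent_cone_ge0 A z (phi : 'rV[R]_n -> R) :
  continuous phi -> (forall t w, 0 < t -> phi (t *: w) = t * phi w) ->
  (\forall h \near (0 : 'rV[R]_n), A (z + h) -> 0 <= phi h) ->
  forall w, tangent_cone A z w -> 0 <= phi w.
Proof.
move=> phi_cont phiZ phi_near w [t [wk [t0 [t_cvg [wk_cvg Awk]]]]].
have twk_cvg : (fun k => t k *: wk k) @ \oo --> (0 : 'rV[R]_n).
  by rewrite -(scale0r w); apply: cvgZ.
apply: (cvgr_to_ge (continuous_cvg _ (phi_cont w) wk_cvg)).
near=> k; have : A (z + t k *: wk k) -> 0 <= phi (t k *: wk k).
  by near: k; apply: (twk_cvg _ phi_near).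
by move/(_ (Awk k)); rewrite phiZ // pmulr_rge0.
Unshelve. all: by end_near.
Qed.

End TangentCone.

Definition linear_growth (R : realType) n (b : R) (g : 'rV[R]_n) (K : set 'rV[R]_n) : Prop :=
  forall u, K u -> b * `|u| <= dotp g u.

Section LinearGrowth.
Variables (R : realType) (n : nat).
Implicit Types (g : 'rV[R]_n) (K L Om : set 'rV[R]_n).

Lemma diff_dotp_grad (f : 'rV[R]_n -> R) z u : 'd f z u = dotp (grad f z) u.
Proof.
rewrite {1}(row_sum_delta u) linear_sum dotpE.
by apply: eq_bigr => i _; rewrite linearZ /= mxE mulrC.
Qed.

Lemma sharp_min_diff_near (f : 'rV[R]_n -> R) Om zb (a : R) :
  differentiable f zb -> 0 < a ->
  (\forall z \near zb, Om z -> f zb + a * `|z - zb| <= f z) ->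
  \forall h \near (0 : 'rV[R]_n), Om (zb + h) -> a / 2 * `|h| <= 'd f zb h.
Proof.
move=> df a0 sharp.
have /eqaddoP /(_ _ (divr_gt0 a0 (ltr0n _ 2))) taylor := diff_locally df.
rewrite (near_shift 0 zb) subr0 in sharp.
near=> h => Om_h.
have /ler_normlP [taylor_lo taylor_hi] :
    `|f (h + zb) - (f zb + 'd f zb h)| <= a / 2 * `|h|.
  by near: h; exact: taylor.
have : f zb + a * `|zb + h - zb| <= f (zb + h).
  by move: Om_h; rewrite addrC; near: h; exact: sharp.
rewrite [zb + h]addrC addrK; lra.
Unshelve. all: by end_near.
Qed.

Lemma sharp_min_linear_growth (f : 'rV[R]_n -> R) Om zb (a : R) :
  differentiable f zb -> 0 < a ->
  (\forall z \near zb, Om z -> f zb + a * `|z - zb| <= f z) ->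
  linear_growth (a / 2) (grad f zb) (tangent_cone Om zb).
Proof.
move=> df a0 sharp u Tu; rewrite -diff_dotp_grad -subr_ge0.
apply: (@tangent_cone_ge0 _ _ _ _ (fun h => 'd f zb h - a / 2 * `|h|)) Tu.
- have dfc : continuous ('d f zb) := diff_continuous df.
  by move=> h; apply: (cvgB (dfc h)); apply: cvgMl_tmp; exact: norm_continuous.
- by move=> t w t0; rewrite linearZ /= normrZ gtr0_norm // mulrBr mulrCA.
- by apply: filterS (sharp_min_diff_near df a0 sharp) => h growth /growth; rewrite subr_ge0.
Qed.

(** As [`|_|] is the max norm, [b * sg (u 0 i) *: delta_mx 0 i] has dual norm
    [b], so adding it to [- g] stays in [polar K]; testing against [u] with
    [`|u| = `|u 0 i|] gives the growth at [u]. *)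
Lemma linear_growth_polar (b : R) g K L : 0 <= b -> polar K `<=` polar L ->
  linear_growth b g K -> linear_growth b g L.
Proof.
move=> b0 polarKL growthK u Lu.
have [->|u0] := eqVneq u 0; first by rewrite normr0 mulr0 dotp0r.
have [i ui] := norm_attained u0.
pose v := - g + (b * Num.sg (u 0 i)) *: delta_mx 0 i.
have dotp_v x : dotp v x = - dotp g x + b * (Num.sg (u 0 i) * x 0 i).
  by rewrite dotpDl dotpNl dotpZl [dotp (delta_mx _ _) _]dotpC dotp_delta_mx mulrA.
have /polarKL /(_ u Lu) : polar K v.
  move=> x Kx; rewrite dotp_v.
  have sg_x : Num.sg (u 0 i) * x 0 i <= `|x|.
    apply: le_trans (ler_norm _) (le_trans _ (coord_le_norm x i)).
    by rewrite normrM normr_sg ler_piMl //; case: (_ != 0).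
  have := growthK x Kx; nra.
by rewrite dotp_v -normrEsg -ui; lra.
Qed.

End LinearGrowth.

Lemma metric_subregular_approx (R : realType) m n (M : 'rV[R]_m -> set 'rV[R]_n) zb wb :
  metric_subregular M zb wb -> exists r kappa, [/\ 0 < r, 0 < kappa &
    forall z v e, `|z - zb| < r -> M z v -> 0 < e ->
      exists2 x, M x wb & `|z - x| < kappa * `|wb - v| + e].
Proof.
move=> [_ [W [nW [ka [ka0 subreg]]]]].
have [r r0 rW] := proj1 (nbhs_ballP _ _) nW.
exists r, ka; split=> // z v e zr Mzv e0.
have Wz : W z by apply: rW; rewrite -ball_normE /= distrC.
have : (dist_set z [set x | M x wb] < (ka * `|wb - v| + e)%:E)%E.
  apply: le_lt_trans (subreg z Wz) _; rewrite EFinD lte_spadder ?lte_fin //.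
  by rewrite EFinM lee_pmul2l ?lte_fin //; apply: ereal_inf_lbound; exists v.
by move=> /ereal_inf_lt [_ [x Mx <-]]; rewrite lte_fin; exists x.
Qed.

Section ExactPenalty.
Variables (R : realType) (d s : nat).
Variables (A : {linear 'rV[R]_d -> 'rV[R]_s}) (K : set 'rV[R]_s).
Variables (g : 'rV[R]_d) (b : R).
Hypothesis b0 : 0 < b.

Lemma exact_penalty_near :
  linear_growth b g [set u | K (A u)] ->
  metric_subregular (fun u => [set y | exists k, K k /\ y = A u - k]) 0 0 ->
  exists2 r, 0 < r & exists2 C, 0 < C & forall u y, `|u| < r -> K y ->
    b * `|u| - C * `|A u - y| <= dotp g u.
Proof.
move=> growth /metric_subregular_approx [r [ka [r0 ka0 approx]]].
set G := \sum_i `|g 0 i|.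
have bG : 0 < b + G by rewrite ltr_pwDl // sumr_ge0.
exists r => //; exists ((b + G) * ka); first by rewrite mulr_gt0.
move=> u y ur Ky; apply/ler_addgt0Pr => e e0.
have u_near : `|u - 0| < r by rewrite subr0.
have Ay : exists k, K k /\ A u - y = A u - k by exists y.
have [x [k [Kk Axk]]] := approx _ _ _ u_near Ay (divr_gt0 e0 bG).
rewrite sub0r normrN => ux.
have /growth gx : K (A x) by move/eqP: Axk; rewrite eq_sym subr_eq0 => /eqP ->.
have /ler_normlP [gux _] := norm_dotp_le g (u - x).
have nu : `|u| <= `|x| + `|u - x| by rewrite -{1}(subrK x u) addrC ler_normD.
have := ltW ux; rewrite -(ler_pM2l bG) mulrDr [_ * (e / _)]mulrCA divff ?gt_eqF // mulr1.
have -> : dotp g u = dotp g x + dotp g (u - x) by rewrite -dotpDr addrC subrK.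
have := ler_wpM2l (ltW b0) nu; rewrite -/G in gux; nra.
Qed.

Lemma exact_penalty : (forall l y, 0 < l -> K y -> K (l *: y)) ->
  linear_growth b g [set u | K (A u)] ->
  metric_subregular (fun u => [set y | exists k, K k /\ y = A u - k]) 0 0 ->
  exists2 C, 0 < C & forall u y, K y -> b * `|u| - C * `|A u - y| <= dotp g u.
Proof.
move=> K_cone growth subreg.
have [r r0 [C C0 near_bound]] := exact_penalty_near growth subreg.
exists C => // u y Ky.
have [l l0 lu] : exists2 l, 0 < l & `|l *: u| < r.
  have u1 : 0 < `|u| + 1 by rewrite ltr_pwDr.
  exists (r / (2 * (`|u| + 1))); first by rewrite divr_gt0 // mulr_gt0.
  rewrite normrZ gtr0_norm ?divr_gt0 ?mulr_gt0 // mulrAC ltr_pdivrMr ?mulr_gt0 //.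
  by rewrite ltr_pM2l //; have := normr_ge0 u; lra.
have := near_bound _ _ lu (K_cone _ _ l0 Ky).
rewrite [A _]linearZ -scalerBr !normrZ gtr0_norm // dotpZr [b * _]mulrCA [C * _]mulrCA -mulrBr.
by rewrite ler_pM2l.
Qed.

End ExactPenalty.

Lemma compact_norm_le (R : realType) n (r : R) : compact [set u : 'rV[R]_n | `|u| <= r].
Proof.
apply: bounded_closed_compact.
  exists r; split; first by rewrite num_real.
  by move=> M rM u /= ur; apply: le_trans ur (ltW rM).
apply: (@preimage_closed _ _ (fun u : 'rV[R]_n => `|u|) [set x | x <= r]).
  by move=> x _; exact: norm_continuous.
exact: closed_le.
Qed.

Lemma exists_min_compact_outside (R : realType) (T : topologicalType)
    (X S : set T) (Phi : T -> R) p0 :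
  continuous Phi -> closed X -> compact S -> X p0 -> S p0 ->
  (forall p, X p -> ~ S p -> Phi p0 < Phi p) ->
  exists2 p, X p & forall q, X q -> Phi p <= Phi q.
Proof.
move=> Phi_cont X_closed S_compact Xp0 Sp0 Phi_out.
have [p /set_mem [_ Xp] p_min] := compact_EVT_min (ex_intro _ p0 (conj Sp0 Xp0))
  (compact_closedI S_compact X_closed) (continuous_subspaceT Phi_cont).
exists p => // q Xq; have [Sq|nSq] := pselect (S q).
  by apply: p_min; exact/mem_set.
by apply: le_trans (ltW (Phi_out q Xq nSq)); apply: p_min; exact/mem_set.
Qed.

Definition penalty (R : realType) d s (A : 'rV[R]_d -> 'rV[R]_s) (g : 'rV[R]_d)
    (p : 'rV[R]_d * 'rV[R]_s) : R :=
  dotp g p.1 + dotp (A p.1 - p.2) (A p.1 - p.2).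

Section PenaltyMin.
Variables (R : realType) (d s : nat).
Variables (A : {linear 'rV[R]_d -> 'rV[R]_s}) (K : set 'rV[R]_s).
Variables (g : 'rV[R]_d) (b C : R).
Hypotheses (b0 : 0 < b) (C0 : 0 < C).
Hypothesis penalty_bound :
  forall u y, K y -> b * `|u| - C * `|A u - y| <= dotp g u.

Lemma penalty_gt0_far (a : R) u y : 0 < a -> (forall v, `|A v| <= a * `|v|) -> K y ->
  C ^+ 2 / b < `|u| \/ a * (C ^+ 2 / b) + 2 * C < `|y| -> 0 < penalty A g (u, y).
Proof.
move=> a0 A_le Ky u_y_far.
(* [b |u| - C D + D^2 > 0] once [C^2 < b |u|] (complete the square) or [2 C < D]. *)
have lower := lerD (penalty_bound u Ky) (sqr_norm_le_dotpp (A u - y)).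
have y_le : `|y| <= `|A u| + `|A u - y|.
  by rewrite -{1}(subKr (A u) y) (le_trans (ler_normB _ _)) // addrC.
move: (`|A u - y|) lower y_le => D lower y_le; apply: lt_le_trans lower.
have [u_far|u_near] := ltP (C ^+ 2 / b) `|u|.
  have : C ^+ 2 < b * `|u| by rewrite mulrC -ltr_pdivrMr.
  by have := sqr_ge0 (2 * D - C); nra.
case: u_y_far => [/lt_le_trans/(_ u_near)|y_far]; first by rewrite ltxx.
have D_far : 2 * C < D.
  have Au_le := le_trans (A_le u) (ler_wpM2l (ltW a0) u_near).
  rewrite -(ltrD2l (a * (C ^+ 2 / b))).
  exact: lt_le_trans y_far (le_trans y_le (lerD Au_le (lexx D))).
have : 0 < D * (D - C) by rewrite mulr_gt0 //; have := C0; lra.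
have : 0 <= b * `|u| by rewrite mulr_ge0 // ltW.
lra.
Qed.

Lemma exists_penalty_min : continuous A -> closed K -> K 0 ->
  exists u y, K y /\
    forall u' y', K y' -> penalty A g (u, y) <= penalty A g (u', y').
Proof.
move=> A_cont K_closed K0; have [a a0 A_le] := linear_lipschitz A_cont.
pose S := [set u : 'rV[R]_d | `|u| <= C ^+ 2 / b] `*`
          [set y : 'rV[R]_s | `|y| <= a * (C ^+ 2 / b) + 2 * C].
have g_cont : continuous (fun p : 'rV[R]_d * 'rV[R]_s => dotp g p.1).
  by apply: continuous_dotp => p; [exact: cvg_cst|exact: cvg_fst].
have res_cont : continuous (fun p : 'rV[R]_d * 'rV[R]_s => A p.1 - p.2).
  move=> q; apply: (@cvgB _ _ _ _ _ (fun p => A p.1) snd); last exact: cvg_snd.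
  by apply: (continuous_cvg _ (A_cont _)); exact: cvg_fst.
have penalty_cont : continuous (penalty A g).
  by move=> p; apply: (cvgD (g_cont p)); exact: (continuous_dotp res_cont res_cont).
have K2_closed : closed [set p : 'rV[R]_d * 'rV[R]_s | K p.2].
  by apply: (@preimage_closed _ _ (@snd 'rV[R]_d 'rV[R]_s) K) => // p _; exact: cvg_snd.
have S_compact : compact S by apply: compact_setX; exact: compact_norm_le.
have S0 : S (0, 0).
  have R1_ge0 : 0 <= C ^+ 2 / b by rewrite divr_ge0 ?sqr_ge0 // ltW.
  split; rewrite /= normr0 //.
  by rewrite addr_ge0 // mulr_ge0 // ltW.
have far p : K p.2 -> ~ S p -> penalty A g (0, 0) < penalty A g p.
  case: p => u y Ky /not_andP u_y_far.
  rewrite /penalty /= linear0 subr0 !dotp0r addr0.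
  apply: penalty_gt0_far a0 A_le Ky _.
  by case: u_y_far => /negP; rewrite -ltNge; [left|right].
have [[u y] Ky u_y_min] :=
  exists_min_compact_outside penalty_cont K2_closed S_compact (K0 : K (0, 0).2) S0 far.
by exists u, y; split => // u' y' Ky'; exact: (u_y_min (u', y')).
Qed.

End PenaltyMin.

Lemma quadratic_ge0_lincoef_eq0 (R : realFieldType) (c B : R) : 0 <= B ->
  (forall t, 0 <= t * c + t ^+ 2 * B) -> c = 0.
Proof.
move=> B0 quad_ge0; have B1 : 0 < B + 1 by rewrite ltr_pwDr.
have := quad_ge0 (- c / (B + 1)).
have -> : - c / (B + 1) * c + (- c / (B + 1)) ^+ 2 * B = - (c / (B + 1)) ^+ 2.
  by field; rewrite gt_eqF.
rewrite oppr_ge0 le_eqVlt ltNge sqr_ge0 orbF sqrf_eq0 mulf_eq0 invr_eq0.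
by rewrite (gt_eqF B1) orbF => /eqP.
Qed.

Section PenaltyOptimality.
Variables (R : realType) (d s : nat).
Variables (A : {linear 'rV[R]_d -> 'rV[R]_s}) (K : set 'rV[R]_s) (g : 'rV[R]_d).
Variables (u : 'rV[R]_d) (y : 'rV[R]_s).
Hypothesis penalty_min :
  forall u' y', K y' -> penalty A g (u, y) <= penalty A g (u', y').

Lemma penalty_min_stationary : K y -> forall v, dotp g v + 2 * dotp (A u - y) (A v) = 0.
Proof.
move=> Ky v; apply: (quadratic_ge0_lincoef_eq0 (dotpp_ge0 (A v))) => t.
have := penalty_min (u + t *: v) Ky.
rewrite /penalty /= [A (u + _)]linearD [A (t *: v)]linearZ addrAC dotppDZ.
by rewrite [dotp g (u + _)]dotpDr dotpZr; lra.
Qed.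

Lemma penalty_min_normal : polar (tangent_cone K y) (A u - y).
Proof.
move=> v [t [vk [t0 [t_cvg [vk_cvg Kk]]]]].
set r := A u - y.
have id_cont : continuous (@id 'rV[R]_s) by move=> x; exact: cvg_id.
have sq_cont : continuous (fun x : 'rV[R]_s => dotp x x).
  exact: (continuous_dotp id_cont id_cont).
have r_cont : continuous (fun x : 'rV[R]_s => dotp r x).
  exact: (continuous_dotp (fun=> cvg_cst r) id_cont).
have quot_cvg : (fun k => t k * dotp (vk k) (vk k) - 2 * dotp r (vk k)) @ \oo -->
    0 * dotp v v - 2 * dotp r v.
  apply: cvgB; first by apply: cvgM => //; exact: (continuous_cvg _ (sq_cont v) vk_cvg).
  by apply: cvgMl_tmp; exact: (continuous_cvg _ (r_cont v) vk_cvg).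
suff : 0 <= 0 * dotp v v - 2 * dotp r v by rewrite mul0r sub0r oppr_ge0 pmulr_rle0.
apply: (cvgr_to_ge quot_cvg); apply: nearW => k.
have := penalty_min u (Kk k).
rewrite /penalty /= opprD addrA -/r -scaleNr dotppDZ -(pmulr_rge0 _ (t0 k)).
by nra.
Qed.

End PenaltyOptimality.

Unset Implicit Arguments.

Theorem corollary4p5 (R : realType) (d s : nat)
  (f : 'rV[R]_d -> R) (P : 'rV[R]_d -> 'rV[R]_s) (D : set 'rV[R]_s)
  (zb : 'rV[R]_d) :
  (forall z, differentiable f z) -> continuous (grad f) ->
  (forall z, differentiable P z) -> continuous (jacobian P) ->
  closed D ->
  sharp_min f [set z | D (P z)] zb ->
  GGCQ P D zb ->
  metric_subregular
    (fun u : 'rV[R]_d =>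
       [set y | exists k, tangent_cone D (P zb) k /\ y = 'd P zb u - k])
    0 0 ->
  exists (w : 'rV[R]_s) (ws : 'rV[R]_s),
    tangent_cone D (P zb) w /\
    reg_normal_cone (tangent_cone D (P zb)) w ws /\
    grad f zb + ws *m (jacobian P zb)^T = 0.
Proof.
move=> df _ dP _ _ [Dzb [a [a0 sharp]]] ggcq subreg.
set A := 'd P zb; set K := tangent_cone D (P zb); set g := grad f zb.
have b0 : 0 < a / 2 by rewrite divr_gt0.
have growth : linear_growth (a / 2) g [set u | K (A u)].
  apply: linear_growth_polar (ltW b0) _ (sharp_min_linear_growth (df zb) a0 sharp).
  by move: ggcq; rewrite /GGCQ /reg_normal_cone => ->.
have [C C0 bound] := exact_penalty b0 (fun l y => @tangent_coneZ _ _ D (P zb) y l) growth subreg.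
have [u [y [Ky u_y_min]]] := exists_penalty_min b0 C0 bound (diff_continuous (dP zb))
  (@closed_tangent_cone _ _ D (P zb)) (@tangent_cone0 _ _ D (P zb) Dzb).
exists y, (2 *: (A u - y)); split=> //; split.
  by move=> v Kv; rewrite dotpZl pmulr_rle0 //; exact: (penalty_min_normal u_y_min Kv).
apply/rowP => j; rewrite [RHS]mxE -dotp_delta_mx dotpDl -dotp_mulmx /jacobian.
by rewrite mul_rV_lin1 dotpZl; exact: (penalty_min_stationary u_y_min Ky).
Qed.
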